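(* Let $F\colon\mathbf{A}\to\mathbf{B}$ be a lens, and let $\bar J_1,\bar J_2\colon\mathbf{B}\to\mathbf{C}$ be the cokernel pair of the get functor $UF$ in $\mathbf{Cat}$ (i.e. the two injections of the pushout of $UF$ along itself). Then $\bar J_1$ and $\bar J_2$ are cosieves, and the unique lenses $J_1$ and $J_2$ whose get functors are $\bar J_1$ and $\bar J_2$ satisfy $J_1\circ F=J_2\circ F$ in $\mathbf{Lens}$.
   Context: A lens $F\colon \mathbf{A}\to\mathbf{B}$ between small categories consists of a functor $F\colon\mathbf{A}\to\mathbf{B}$ (the get functor) together with, for each object $A$ of $\mathbf{A}$, a function $\varphi_{F,A}$ from the set of morphisms of $\mathbf{B}$ with domain $FA$ to the set of morphisms of $\mathbf{A}$ with domain $A$, such that: $F(\varphi_{F,A}b)=b$; $\varphi_{F,A}(\mathrm{id}_{FA})=\mathrm{id}_A$; and $\varphi_{F,A}(b'\circ b)=\varphi_{F,A'}(b')\circ\varphi_{F,A}(b)$ whenever $b$ has domain $FA$, $A'$ is the codomain of $\varphi_{F,A}b$, and $b'$ has domain $FA'$. $\mathbf{Lens}$ is the category of small categories and lenses, with composite of $F\colon\mathbf{A}\to\mathbf{B}$, $G\colon\mathbf{B}\to\mathbf{C}$ having get functor $G\circ F$ and puts $\varphi_{G\circ F,A}(c)=\varphi_{F,A}(\varphi_{G,FA}(c))$. $U\colon\mathbf{Lens}\to\mathbf{Cat}$ sends a lens to its get functor. A functor $F\colon\mathbf{A}\to\mathbf{B}$ is a discrete opfibration if for each object $A$ and each morphism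 $b$ of $\mathbf{B}$ with domain $FA$ there is a unique morphism $a$ of $\mathbf{A}$ with domain $A$ and $Fa=b$; a discrete opfibration has exactly one lens structure (puts given by these unique lifts). A cosieve is an injective-on-objects discrete opfibration. *)

From Stdlib Require Import Utf8.

(** Composition is a total
    function whose value is only constrained on composable pairs
    (cod f = dom g); its value on non-composable pairs is irrelevant. *)
Record cat := Cat {
  ob : Type;
  arr : Type;
  dom : arr -> ob;
  cod : arr -> ob;
  idn : ob -> arr;
  comp : arr -> arr -> arr;
  dom_idn : forall x, dom (idn x) = x;
  cod_idn : forall x, cod (idn x) = x;
  dom_comp : forall f g, cod f = dom g -> dom (comp g f) = dom f;
  cod_comp : forall f g, cod f = dom g -> cod (comp g f) = cod g;
  comp_idl : forall f, comp (idn (cod f)) f = f;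
  comp_idr : forall f, comp f (idn (dom f)) = f;
  comp_assoc : forall f g h, cod f = dom g -> cod g = dom h ->
    comp h (comp g f) = comp (comp h g) f
}.

Arguments dom {c} _.
Arguments cod {c} _.
Arguments idn {c} _.
Arguments comp {c} _ _.

Record functor (A B : cat) := Functor {
  fo : ob A -> ob B;
  fa : arr A -> arr B;
  fdom : forall f, dom (fa f) = fo (dom f);
  fcod : forall f, cod (fa f) = fo (cod f);
  fidn : forall x, fa (idn x) = idn (fo x);
  fcomp : forall f g, cod f = dom g -> fa (comp g f) = comp (fa g) (fa f)
}.

Arguments fo {A B} _ _.
Arguments fa {A B} _ _.

Definition feq {A B : cat} (F G : functor A B) : Prop :=
  (forall x, fo F x = fo G x) /\ (forall f, fa F f = fa G f).

Definition fcompose {A B C : cat} (F : functor A B) (G : functor B C) : functor A C.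
Proof.
  refine (@Functor A C (fun x => fo G (fo F x)) (fun f => fa G (fa F f)) _ _ _ _).
  - intro f. rewrite fdom, fdom. reflexivity.
  - intro f. rewrite fcod, fcod. reflexivity.
  - intro x. rewrite fidn, fidn. reflexivity.
  - intros f g H. rewrite fcomp by exact H. apply fcomp.
    rewrite fcod, fdom, H. reflexivity.
Defined.

Definition is_pushout {A B B' C : cat} (F : functor A B) (G : functor A B')
    (J1 : functor B C) (J2 : functor B' C) : Prop :=
  feq (fcompose F J1) (fcompose G J2) /\
  forall (D : cat) (K1 : functor B D) (K2 : functor B' D),
    feq (fcompose F K1) (fcompose G K2) ->
    (exists H : functor C D, feq (fcompose J1 H) K1 /\ feq (fcompose J2 H) K2) /\
    (forall H H' : functor C D,
        feq (fcompose J1 H) K1 -> feq (fcompose J2 H) K2 ->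
        feq (fcompose J1 H') K1 -> feq (fcompose J2 H') K2 -> feq H H').

Definition discrete_opfibration {A B : cat} (F : functor A B) : Prop :=
  forall (a : ob A) (b : arr B), dom b = fo F a ->
    exists! x : arr A, dom x = a /\ fa F x = b.

Definition cosieve {A B : cat} (F : functor A B) : Prop :=
  (forall x y : ob A, fo F x = fo F y -> x = y) /\ discrete_opfibration F.

(** Lens structure on a functor: [put a b] is φ_{F,a}(b); only its values on
    arrows [b] with [dom b = F a] matter. *)
Definition is_lens {A B : cat} (F : functor A B) (put : ob A -> arr B -> arr A) : Prop :=
  (forall a b, dom b = fo F a -> dom (put a b) = a /\ fa F (put a b) = b) /\
  (forall a, put a (idn (fo F a)) = idn a) /\
  (forall a b b', dom b = fo F a -> dom b' = fo F (cod (put a b)) ->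
     put a (comp b' b) = comp (put (cod (put a b)) b') (put a b)).

Record lens (A B : cat) := Lens {
  lget : functor A B;
  lput : ob A -> arr B -> arr A;
  lens_ax : is_lens lget lput
}.

Arguments lget {A B} _.
Arguments lput {A B} _ _ _.

Definition lens_eq {A B : cat} (L L' : lens A B) : Prop :=
  feq (lget L) (lget L') /\
  (forall a b, dom b = fo (lget L) a -> lput L a b = lput L' a b).

Definition lens_comp {A B C : cat} (F : lens A B) (G : lens B C) : lens A C.
Proof.
  refine (@Lens A C (fcompose (lget F) (lget G))
            (fun a c => lput F a (lput G (fo (lget F) a) c)) _).
  destruct F as [F pF [HF1 [HF2 HF3]]], G as [G pG [HG1 [HG2 HG3]]]; simpl.
  split; [|split].
  - intros a c Hc.
    destruct (HG1 _ _ Hc) as [Hd Hf].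
    destruct (HF1 _ _ Hd) as [Hd' Hf'].
    split; [exact Hd'|]. simpl. rewrite Hf', Hf. reflexivity.
  - intro a. rewrite HG2, HF2. reflexivity.
  - intros a c c' Hc Hc'.
    destruct (HG1 _ _ Hc) as [Hd Hf].
    destruct (HF1 _ _ Hd) as [Hd' Hf'].
    assert (E : fo F (cod (pF a (pG (fo F a) c))) = cod (pG (fo F a) c)).
    { rewrite <- fcod, Hf'. reflexivity. }
    simpl. rewrite HG3; [| exact Hc | simpl in Hc'; rewrite E in Hc'; exact Hc'].
    rewrite E.
    apply HF3; [exact Hd|].
    destruct (HG1 (cod (pG (fo F a) c)) c') as [Hd2 _];
      [simpl in Hc'; rewrite E in Hc'; exact Hc'|].
    rewrite Hd2, E. reflexivity.
Defined.

(* The objects in the image of a lens F form a set S closed under codomains,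
   and every arrow of B out of S is the get of a put, so the two legs J1, J2 of
   the cokernel pair agree on S and on all arrows out of S.  The codiagonal
   retracts both legs, so they are injective on objects and arrows.  Gluing two
   copies of B along S gives a cocone whose legs are discrete opfibrations; the
   comparison map from C into it has a retraction, through which the lifts
   transfer to J1 and J2.  Finally, the puts of J1 ∘ F and J2 ∘ F both lift an
   arrow out of J2 (F a), and these lifts coincide because J2 is faithful and
   agrees with J1 on arrows out of S. *)

From Stdlib Require Import ClassicalEpsilon Bool.

Definition asbool (P : Prop) : bool :=
  if excluded_middle_informative P then true else false.

Lemma asboolP (P : Prop) : reflect P (asbool P).
Proof. unfold asbool; destruct excluded_middle_informative; constructor; assumption. Qed.

Definition fid (B : cat) : functor B B.
Proof. refine (@Functor B B (fun x => x) (fun f => f) _ _ _ _); reflexivity. Defined.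

Definition in_image {A B : cat} (F : functor A B) (y : ob B) : Prop :=
  exists a, fo F a = y.

Definition has_lifts {B C : cat} (K : functor B C) : Prop :=
  forall x c, dom c = fo K x -> exists b, dom b = x /\ fa K b = c.

Lemma feq_fcompose_assoc {X Y Z W : cat} {F : functor X Y} {K : functor Y Z}
    {L : functor X Z} {H : functor Z W} {N : functor X W} :
  feq (fcompose F K) L -> feq (fcompose L H) N -> feq (fcompose F (fcompose K H)) N.
Proof.
  intros [Ko Ka] [Ho Ha]; simpl in *.
  split; intro; simpl; [rewrite Ko; apply Ho | rewrite Ka; apply Ha].
Qed.

Lemma retraction_fo_inj {B C : cat} {K : functor B C} {R : functor C B} :
  feq (fcompose K R) (fid B) -> forall x y, fo K x = fo K y -> x = y.
Proof.
  intros [Ro _] x y E; simpl in Ro.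
  rewrite <- (Ro x), <- (Ro y), E; reflexivity.
Qed.

Lemma retraction_fa_inj {B C : cat} {K : functor B C} {R : functor C B} :
  feq (fcompose K R) (fid B) -> forall f g, fa K f = fa K g -> f = g.
Proof.
  intros [_ Ra] f g E; simpl in Ra.
  rewrite <- (Ra f), <- (Ra g), E; reflexivity.
Qed.

Lemma cosieve_of_retraction {B C : cat} {K : functor B C} {R : functor C B} :
  feq (fcompose K R) (fid B) -> has_lifts K -> cosieve K.
Proof.
  intros HR HK; split; [exact (retraction_fo_inj HR)|].
  intros x c Hc; destruct (HK x c Hc) as [b Hb].
  exists b; split; [exact Hb|].
  intros b' [_ Hb']; apply (retraction_fa_inj HR); rewrite Hb'; apply Hb.
Qed.

Lemma lifts_of_retract {B C P : cat} {K : functor B C} {L : functor B P}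
    {M : functor C P} {G : functor P C} :
  feq (fcompose K M) L -> feq (fcompose M G) (fid C) -> has_lifts L -> has_lifts K.
Proof.
  intros [KMo KMa] [_ GM] HL x c Hc; simpl in KMo, KMa, GM.
  destruct (HL x (fa M c)) as [q [Hq HMc]].
  { rewrite fdom, Hc; apply KMo. }
  exists q; split; [exact Hq|].
  rewrite <- (GM c), <- HMc, <- KMa; symmetry; apply GM.
Qed.

Lemma pushout_endo_id {A B B' C : cat} {F : functor A B} {G : functor A B'}
    {J1 : functor B C} {J2 : functor B' C} {H : functor C C} :
  is_pushout F G J1 J2 ->
  feq (fcompose J1 H) J1 -> feq (fcompose J2 H) J2 -> feq H (fid C).
Proof.
  intros [Hcocone U] H1 H2.
  destruct (U C J1 J2 Hcocone) as [_ Uniq].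
  apply Uniq; auto; split; reflexivity.
Qed.

Lemma cokernel_pair_codiagonal {A B C : cat} {F : functor A B} {J1 J2 : functor B C} :
  is_pushout F F J1 J2 ->
  exists R : functor C B, feq (fcompose J1 R) (fid B) /\ feq (fcompose J2 R) (fid B).
Proof.
  intros [_ U].
  destruct (U B (fid B) (fid B)) as [[R HR] _]; [split; reflexivity|].
  exists R; exact HR.
Qed.

Section Glue.

Context {B : cat} {S : ob B -> Prop}.
Hypothesis S_cod : forall b : arr B, S (dom b) -> S (cod b).

(* Two copies of B glued along the full subcategory on S.  Layer [true] is the
   first copy; layer [false] is the second one, whose objects in S are never
   reached (they are identified with the first layer by [glue_in false]): an
   arrow of the second copy entering S lands in the first layer. *)
Definition glue : cat.
Proof.
  refine (@Cat (ob B * bool) (arr B * bool)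
    (fun f => (dom (fst f), snd f))
    (fun f => (cod (fst f),
               snd f || (asbool (S (cod (fst f))) && negb (asbool (S (dom (fst f)))))))
    (fun x => (idn (fst x), snd x))
    (fun g f => (comp (fst g) (fst f), snd f))
    _ _ _ _ _ _ _).
  - intros [y t]; simpl; rewrite dom_idn; reflexivity.
  - intros [y t]; simpl; rewrite cod_idn, dom_idn.
    destruct (asbool (S y)), t; reflexivity.
  - intros [f t] [g u] H; injection H as H _; simpl.
    rewrite dom_comp by exact H; reflexivity.
  - intros [f t] [g u] H; injection H as H Hu; simpl in *; subst u.
    rewrite cod_comp, dom_comp by exact H; f_equal.
    rewrite <- H; pose proof (S_cod f); pose proof (S_cod g) as Sg; rewrite <- H in Sg.
    destruct (asboolP (S (dom f))), (asboolP (S (cod f))), (asboolP (S (cod g)));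
      destruct t; simpl; solve [reflexivity | exfalso; auto].
  - intros [f t]; simpl; rewrite comp_idl; reflexivity.
  - intros [f t]; simpl; rewrite comp_idr; reflexivity.
  - intros [f t] [g u] [h v] H H'; injection H as H _; injection H' as H' _; simpl.
    rewrite comp_assoc by assumption; reflexivity.
Defined.

Definition glue_in (i : bool) : functor B glue.
Proof.
  refine (@Functor B glue (fun y => (y, i || asbool (S y)))
            (fun b => (b, i || asbool (S (dom b)))) _ _ _ _).
  - reflexivity.
  - intro f; simpl; f_equal.
    destruct (asboolP (S (dom f))), (asboolP (S (cod f))), i;
      simpl; solve [reflexivity | exfalso; auto].
  - intro x; simpl; rewrite dom_idn; reflexivity.
  - intros f g H; simpl; rewrite dom_comp by exact H; reflexivity.
Defined.

Lemma glue_in_lifts (i : bool) : has_lifts (glue_in i).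
Proof.
  intros x [b t] H; injection H as Hb Ht; simpl in *.
  exists b; split; [exact Hb|]; simpl; rewrite Hb, Ht; reflexivity.
Qed.

Lemma glue_in_cocone {A : cat} (F : functor A B) :
  (forall a, S (fo F a)) -> feq (fcompose F (glue_in true)) (fcompose F (glue_in false)).
Proof.
  intro HF; split; [intro a | intro f]; simpl; [|rewrite fdom]; f_equal;
    [destruct (asboolP (S (fo F a))) as [|n] | destruct (asboolP (S (fo F (dom f)))) as [|n]];
    solve [reflexivity | contradiction (n (HF _))].
Qed.

Context {C : cat} {J1 J2 : functor B C}.
Hypothesis agree_ob : forall y, S y -> fo J1 y = fo J2 y.
Hypothesis agree_arr : forall g, S (dom g) -> fa J1 g = fa J2 g.

Definition glue_copair : functor glue C.
Proof.
  refine (@Functor glue C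
    (fun x => if snd x then fo J1 (fst x) else fo J2 (fst x))
    (fun f => if snd f then fa J1 (fst f) else fa J2 (fst f)) _ _ _ _).
  - intros [f []]; apply fdom.
  - intros [f []]; simpl; [apply fcod|]; rewrite fcod.
    destruct (asboolP (S (cod f))), (asboolP (S (dom f))); simpl; try reflexivity.
    symmetry; auto.
  - intros [y []]; apply fidn.
  - intros [f t] [g u] H; injection H as H Hu; simpl in *; subst u.
    destruct t; simpl; rewrite fcomp by exact H; [reflexivity|].
    destruct (asboolP (S (cod f))), (asboolP (S (dom f))); simpl; try reflexivity.
    rewrite agree_arr; [reflexivity | rewrite <- H; assumption].
Defined.

Lemma glue_copair_in1 : feq (fcompose (glue_in true) glue_copair) J1.
Proof. split; reflexivity. Qed.

Lemma glue_copair_in2 : feq (fcompose (glue_in false) glue_copair) J2.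
Proof.
  split; [intro y | intro g]; simpl;
    [destruct (asboolP (S y)) | destruct (asboolP (S (dom g)))]; auto.
Qed.

End Glue.

Lemma lput_lift {A B : cat} (L : lens A B) (a : ob A) (b : arr B) :
  dom b = fo (lget L) a -> dom (lput L a b) = a /\ fa (lget L) (lput L a b) = b.
Proof. apply (proj1 (lens_ax _ _ L)). Qed.

Lemma lens_image_cod {A B : cat} (F : lens A B) (b : arr B) :
  in_image (lget F) (dom b) -> in_image (lget F) (cod b).
Proof.
  intros [a Ha]; destruct (lput_lift F a b (eq_sym Ha)) as [_ Hb].
  exists (cod (lput F a b)); rewrite <- fcod, Hb; reflexivity.
Qed.

Lemma lens_comp_eq_of_agree {A B C : cat} {F : lens A B} {K1 K2 : functor B C}
    {L1 L2 : lens B C} :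
  feq (lget L1) K1 -> feq (lget L2) K2 ->
  (forall y, in_image (lget F) y -> fo K1 y = fo K2 y) ->
  (forall g, in_image (lget F) (dom g) -> fa K1 g = fa K2 g) ->
  (forall f g, fa K2 f = fa K2 g -> f = g) ->
  lens_eq (lens_comp F L1) (lens_comp F L2).
Proof.
  intros [E1o E1a] [E2o E2a] Ao Aa K2_inj; split.
  - split; intro; simpl; [rewrite E1o, E2o | rewrite E1a, E2a].
    + apply Ao; exists x; reflexivity.
    + apply Aa; exists (dom f); rewrite fdom; reflexivity.
  - intros a c Hc; simpl in *; f_equal.
    destruct (lput_lift L1 (fo (lget F) a) c Hc) as [D1 G1].
    destruct (lput_lift L2 (fo (lget F) a) c) as [_ G2].
    { rewrite Hc, E1o, E2o; apply Ao; exists a; reflexivity. }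
    apply K2_inj; rewrite <- Aa by (rewrite D1; exists a; reflexivity).
    rewrite <- E1a, <- E2a, G1, G2; reflexivity.
Qed.

Section Cokernel_pair_of_lens.

Context {A B C : cat} {F : lens A B} {J1 J2 : functor B C}.
Hypothesis HJ : is_pushout (lget F) (lget F) J1 J2.

Lemma cokernel_pair_agree_ob (y : ob B) : in_image (lget F) y -> fo J1 y = fo J2 y.
Proof. destruct HJ as [[Co _] _]; intros [a <-]; apply Co. Qed.

Lemma cokernel_pair_agree_arr (g : arr B) :
  in_image (lget F) (dom g) -> fa J1 g = fa J2 g.
Proof.
  destruct HJ as [[_ Ca] _]; intros [a Ha].
  destruct (lput_lift F a g (eq_sym Ha)) as [_ Hg].
  rewrite <- Hg; apply Ca.
Qed.

Lemma cokernel_pair_lifts : has_lifts J1 /\ has_lifts J2.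
Proof.
  pose (S_cod := lens_image_cod F).
  pose (G := glue_copair S_cod cokernel_pair_agree_ob cokernel_pair_agree_arr).
  destruct HJ as [_ U].
  destruct (U _ (glue_in S_cod true) (glue_in S_cod false)) as [[M [M1 M2]] _].
  { apply glue_in_cocone; intro a; exists a; reflexivity. }
  assert (MG : feq (fcompose M G) (fid C)).
  { apply (pushout_endo_id HJ).
    - exact (feq_fcompose_assoc M1 (glue_copair_in1 _ _ _)).
    - exact (feq_fcompose_assoc M2 (glue_copair_in2 _ _ _)). }
  split; eapply lifts_of_retract; eauto using glue_in_lifts.
Qed.

End Cokernel_pair_of_lens.

Theorem proposition3p9 (A B C : cat) (F : lens A B) (J1b J2b : functor B C) :
  is_pushout (lget F) (lget F) J1b J2b ->
  cosieve J1b /\ cosieve J2b /\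
  (forall J1 J2 : lens B C,
     feq (lget J1) J1b -> feq (lget J2) J2b ->
     lens_eq (lens_comp F J1) (lens_comp F J2)).
Proof.
  intro HJ.
  destruct (cokernel_pair_codiagonal HJ) as [R [R1 R2]].
  destruct (cokernel_pair_lifts HJ) as [L1 L2].
  split; [|split].
  - exact (cosieve_of_retraction R1 L1).
  - exact (cosieve_of_retraction R2 L2).
  - intros J1 J2 E1 E2.
    exact (lens_comp_eq_of_agree E1 E2 (cokernel_pair_agree_ob HJ)
             (cokernel_pair_agree_arr HJ) (retraction_fa_inj R2)).
Qed.
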